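(* (1) For every tidy fixpoint formula $\xi=\eta x.\chi$, $\Omega_g(\xi)$ has parity $\eta$. (2) If $\phi,\psi$ are tidy fixpoint formulas with $\phi\sqsubseteq_C\psi$, then $\Omega_g(\phi)\le\Omega_g(\psi)$, and $\Omega_g(\phi)<\Omega_g(\psi)$ if $\phi$ and $\psi$ have different types. (3) For every closure cluster $C$ (of tidy formulas), $\mathit{cd}(C)=\mathit{ind}(C)=|\mathrm{Ran}(\Omega_g\restriction_C)|$, where $\mathit{ind}(C)$ is the maximal $n$ such that there are fixpoint formulas $\phi_1,\dots,\phi_n\in C$ with $\Omega_g(\phi_1)<\cdots<\Omega_g(\phi_n)$ and $\Omega_g(\phi_i),\Omega_g(\phi_{i+1})$ of different parity for all $i<n$.
   Context: Syntax. Formulas of the modal $\mu$-calculus are taken in negation normal form: $\phi ::= \top \mid \bot \mid p \mid \neg p \mid x \mid \phi\land\phi\mid\phi\lor\phi\mid\Diamond\phi\mid\Box\phi\mid\mu x.\phi\mid\nu x.\phi$, where $p$ ranges over proposition letters and $x$ over an infinite supply of variables (which occur only positively). The formulas $\top,\bot,p,\neg p,x$ are atomic. $\mathrm{FV}(\phi)$ and $\mathrm{BV}(\phi)$ are the sets of free and bound variables of $\phi$; $\phi$ is tidy if $\mathrm{FV}(\phi)\cap\mathrm{BV}(\phi)=\varnothing$. A fixpoint formula is one of the form $\eta x.\chi$ with $\eta\in\{\mu,\nu\}$; it has type $\eta$, where $\mu$ counts as odd and $\nu$ as even parity, and $\bar\eta$ denotes the other operator. $\chi[\xi/x]$ is the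 result of replacing every free occurrence of $x$ in $\chi$ by $\xi$; $\xi$ is free for $x$ in $\chi$ if no free variable of $\xi$ becomes bound in $\chi[\xi/x]$. Traces and closure. The trace relation $\rightarrow_C$: $\phi_0\odot\phi_1\rightarrow_C\phi_i$ for $\odot\in\{\land,\lor\}$, $i\in\{0,1\}$; $\heartsuit\phi\rightarrow_C\phi$ for $\heartsuit\in\{\Diamond,\Box\}$; $\eta x.\phi\rightarrow_C\phi[\eta x.\phi/x]$; atomic formulas have no successors. $\twoheadrightarrow_C$ is the reflexive transitive closure of $\rightarrow_C$, $\mathrm{Clos}(\phi)=\{\psi\mid\phi\twoheadrightarrow_C\psi\}$ (a finite set), and a trace is a finite or infinite sequence of formulas with consecutive members related by $\rightarrow_C$. Write $\phi\equiv_C\psi$ iff $\phi\twoheadrightarrow_C\psi$ and $\psi\twoheadrightarrow_C\phi$; its equivalence classes are (closure) clusters, and $C(\phi)$ is the cluster of $\phi$. Free subformulas. $\phi\trianglelefteq_f\psi$ iff $\psi=\chi[\phi/y]$ for some formula $\chi$ and variable $y$ with $y\in\mathrm{FV}(\chi)$ and $\phi$ free for $y$ in $\chi$. Closure order. For a formula $\psi$, write $\rho\twoheadrightarrow_C^{\psi}\sigma$ iff there is a trace $\rho=\chi_0\rightarrow_C\cdots\rightarrow_C\chi_n=\sigma$ ($n\ge0$) with $\psi\trianglelefteq_f\chi_i$ for all $i\le n$. For fixpoint formulas $\phi,\psi$: $\phi\sqsubseteq_C\psi$ iff $\psi\twoheadrightarrow_C^{\psi}\phi$; $\phi\sqsubset_C\psi$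 iff $\phi\sqsubseteq_C\psi$ and $\psi\not\sqsubseteq_C\phi$. Chains. An alternating $\sqsubset_C$-chain of length $n$ is a sequence $\eta_1x_1.\chi_1,\dots,\eta_nx_n.\chi_n$ of tidy fixpoint formulas with $\eta_ix_i.\chi_i\sqsubset_C\eta_{i+1}x_{i+1}.\chi_{i+1}$ and $\eta_{i+1}=\bar\eta_i$ for all $i<n$; it starts at the first and leads up to the last formula. For a tidy fixpoint formula $\xi$, $h^\uparrow(\xi)$ (resp. $h^\downarrow(\xi)$) is the maximal length of an alternating $\sqsubset_C$-chain starting at (resp. leading up to) $\xi$. For a cluster $C$, $\mathit{cd}(C)$ is the maximal length of an alternating $\sqsubset_C$-chain inside $C$. Global priority map. For a tidy fixpoint formula $\psi=\eta y.\phi$ let $d=\mathit{cd}(C(\psi))-h^\uparrow(\psi)$ and set $\Omega_g(\psi)=d$ if $d$ has parity $\eta$ and $\Omega_g(\psi)=d+1$ otherwise; $\Omega_g$ is undefined on non-fixpoint formulas. *)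

From Stdlib Require Import List Arith ZArith ClassicalEpsilon Relation_Operators.
Import ListNotations.
Set Implicit Arguments.

Inductive form : Type :=
| FTop | FBot
| FProp (p : nat) | FNProp (p : nat)
| FVar (x : nat)
| FAnd (a b : form) | FOr (a b : form)
| FDia (a : form) | FBox (a : form)
| FMu (x : nat) (a : form) | FNu (x : nat) (a : form).

Inductive fp := MuT | NuT.

Definition fp_bar (e : fp) : fp := match e with MuT => NuT | NuT => MuT end.

Definition ftype (f : form) : option fp :=
  match f with FMu _ _ => Some MuT | FNu _ _ => Some NuT | _ => None end.

Definition is_fix (f : form) : Prop := exists e, ftype f = Some e.

Definition has_parity (e : fp) (n : Z) : Prop :=
  match e with MuT => Z.odd n = true | NuT => Z.odd n = false end.

Fixpoint free_in (x : nat) (f : form) : Prop :=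
  match f with
  | FVar y => y = x
  | FAnd a b | FOr a b => free_in x a \/ free_in x b
  | FDia a | FBox a => free_in x a
  | FMu y a | FNu y a => y <> x /\ free_in x a
  | _ => False
  end.

Fixpoint bound_in (x : nat) (f : form) : Prop :=
  match f with
  | FAnd a b | FOr a b => bound_in x a \/ bound_in x b
  | FDia a | FBox a => bound_in x a
  | FMu y a | FNu y a => y = x \/ bound_in x a
  | _ => False
  end.

Definition tidy (f : form) : Prop := forall x, ~ (free_in x f /\ bound_in x f).

(* subst chi xi x = chi[xi/x]: replace every free occurrence of x by xi *)
Fixpoint subst (chi xi : form) (x : nat) : form :=
  match chi with
  | FVar y => if Nat.eqb y x then xi else FVar y
  | FAnd a b => FAnd (subst a xi x) (subst b xi x)
  | FOr a b => FOr (subst a xi x) (subst b xi x)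
  | FDia a => FDia (subst a xi x)
  | FBox a => FBox (subst a xi x)
  | FMu y a => if Nat.eqb y x then FMu y a else FMu y (subst a xi x)
  | FNu y a => if Nat.eqb y x then FNu y a else FNu y (subst a xi x)
  | c => c
  end.

(* xi is free for x in chi: no free variable of xi becomes bound in chi[xi/x] *)
Fixpoint free_for (xi : form) (x : nat) (chi : form) : Prop :=
  match chi with
  | FAnd a b | FOr a b => free_for xi x a /\ free_for xi x b
  | FDia a | FBox a => free_for xi x a
  | FMu y a | FNu y a =>
      y = x \/ ((free_in x a -> ~ free_in y xi) /\ free_for xi x a)
  | _ => True
  end.

Inductive step : form -> form -> Prop :=
| st_and_l a b : step (FAnd a b) a
| st_and_r a b : step (FAnd a b) b
| st_or_l a b : step (FOr a b) a
| st_or_r a b : step (FOr a b) b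
| st_dia a : step (FDia a) a
| st_box a : step (FBox a) a
| st_mu x a : step (FMu x a) (subst a (FMu x a) x)
| st_nu x a : step (FNu x a) (subst a (FNu x a) x).

Definition steps : form -> form -> Prop := clos_refl_trans form step.

Definition equivC (f g : form) : Prop := steps f g /\ steps g f.
Definition cluster (f : form) : form -> Prop := fun g => equivC f g.

Definition free_sub (phi psi : form) : Prop :=
  exists chi y, psi = subst chi phi y /\ free_in y chi /\ free_for phi y chi.

Inductive tr_in (psi : form) : form -> form -> Prop :=
| tr_refl r : free_sub psi r -> tr_in psi r r
| tr_step r r' s : free_sub psi r -> step r r' -> tr_in psi r' s -> tr_in psi r s.

Definition sqle (phi psi : form) : Prop :=
  is_fix phi /\ is_fix psi /\ tr_in psi psi phi.
Definition sqlt (phi psi : form) : Prop := sqle phi psi /\ ~ sqle psi phi.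

Definition tidy_fix (f : form) : Prop := tidy f /\ is_fix f.

Fixpoint alt_chain (l : list form) : Prop :=
  match l with
  | [] => True
  | a :: t =>
      tidy_fix a /\
      match t with
      | [] => True
      | b :: _ => sqlt a b /\
                  (forall e, ftype a = Some e -> ftype b = Some (fp_bar e)) /\
                  alt_chain t
      end
  end.

(* the maximum of a set of naturals (classical choice; the maximum exists in
   all cases used here since closures are finite) *)
Definition maxnat (P : nat -> Prop) : nat :=
  epsilon (inhabits 0) (fun n => P n /\ forall m, P m -> m <= n).

Definition h_up (xi : form) : nat :=
  maxnat (fun n => exists l, alt_chain (xi :: l) /\ length (xi :: l) = n).

Definition h_down (xi : form) : nat :=
  maxnat (fun n => exists l, alt_chain (l ++ [xi]) /\ length (l ++ [xi]) = n).

Definition cd (C : form -> Prop) : nat :=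
  maxnat (fun n => exists l, alt_chain l /\ Forall C l /\ length l = n).

Definition Omega_g (psi : form) : option Z :=
  match ftype psi with
  | None => None
  | Some e =>
      let d := (Z.of_nat (cd (cluster psi)) - Z.of_nat (h_up psi))%Z in
      Some (match e with
            | MuT => if Z.odd d then d else (d + 1)%Z
            | NuT => if Z.odd d then (d + 1)%Z else d
            end)
  end.

Fixpoint alt_incr (l : list Z) : Prop :=
  match l with
  | [] => True
  | a :: t =>
      match t with
      | [] => True
      | b :: _ => (a < b)%Z /\ Z.odd a <> Z.odd b /\ alt_incr t
      end
  end.

Definition ind (C : form -> Prop) : nat :=
  maxnat (fun n => exists l : list form,
    Forall (fun f => C f /\ is_fix f) l /\ length l = n /\
    exists ks, Forall2 (fun f k => Omega_g f = Some k) l ks /\ alt_incr ks).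

Definition range_Omega (C : form -> Prop) : Z -> Prop :=
  fun k => exists f, C f /\ Omega_g f = Some k.

(* Part (1) holds by construction: Omega_g rounds d = cd(C) - h_up(xi) up to
   the parity of the type of xi.  Part (2) rests on the monotonicity of h_up
   along the closure order: if phi [= psi, then h_up psi <= h_up phi, strictly
   when the types differ (a chain starting at psi is extended by phi); both
   formulas lie in the same cluster, so Omega_g is monotone.

   We first show that closures of tidy formulas are
   finite (so cd is a genuine maximum; h_up is bounded by size), and that in a tidy cluster the
   fixpoint formula T of least size is a subformula of every member, whence
   every fixpoint formula a of the cluster satisfies a [= T.  Consequently
   every formula of height 1 has the type of T, and by induction along
   maximal chains the type of every fixpoint formula f of the cluster has
   parity h_up(f) + k for a constant k.  Hence Omega_g(f) = off + cd - h_up(f)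
   for a constant off in {0,1}: Omega_g is a strictly decreasing function of
   the height.  A chain of length cd realises every height 1..cd, which gives
   both |Ran Omega_g| = cd and ind = cd. *)

From Stdlib Require Import List Arith Lia ZArith Classical ClassicalEpsilon
  Relation_Operators Operators_Properties FunctionalExtensionality PropExtensionality.
Import ListNotations.

Fixpoint fsize (f : form) : nat :=
  match f with
  | FAnd a b | FOr a b => S (fsize a + fsize b)
  | FDia a | FBox a | FMu _ a | FNu _ a => S (fsize a)
  | _ => 1
  end.

Inductive sub (t : form) : form -> Prop :=
| sub_refl : sub t t
| sub_andl a b : sub t a -> sub t (FAnd a b)
| sub_andr a b : sub t b -> sub t (FAnd a b)
| sub_orl a b : sub t a -> sub t (FOr a b)
| sub_orr a b : sub t b -> sub t (FOr a b)
| sub_dia a : sub t a -> sub t (FDia a)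
| sub_box a : sub t a -> sub t (FBox a)
| sub_mu x a : sub t a -> sub t (FMu x a)
| sub_nu x a : sub t a -> sub t (FNu x a).

(* [free_occ t r]: t occurs in r below no binder capturing a free variable of
   t.  This is the inductive counterpart of the free subformula relation. *)
Inductive free_occ (t : form) : form -> Prop :=
| fo_refl : free_occ t t
| fo_andl a b : free_occ t a -> free_occ t (FAnd a b)
| fo_andr a b : free_occ t b -> free_occ t (FAnd a b)
| fo_orl a b : free_occ t a -> free_occ t (FOr a b)
| fo_orr a b : free_occ t b -> free_occ t (FOr a b)
| fo_dia a : free_occ t a -> free_occ t (FDia a)
| fo_box a : free_occ t a -> free_occ t (FBox a)
| fo_mu x a : ~ free_in x t -> free_occ t a -> free_occ t (FMu x a)
| fo_nu x a : ~ free_in x t -> free_occ t a -> free_occ t (FNu x a).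

Lemma subst_notfree : forall f t x, ~ free_in x f -> subst f t x = f.
Proof.
  induction f; intros t y H; simpl in *; auto.
  - destruct (Nat.eqb_spec x y); subst; auto. exfalso; auto.
  - rewrite IHf1, IHf2; tauto.
  - rewrite IHf1, IHf2; tauto.
  - rewrite IHf; auto.
  - rewrite IHf; auto.
  - destruct (Nat.eqb_spec x y); auto. rewrite IHf; auto.
  - destruct (Nat.eqb_spec x y); auto. rewrite IHf; auto.
Qed.

Lemma free_for_notfree : forall chi xi y, ~ free_in y chi -> free_for xi y chi.
Proof.
  induction chi; intros xi y H; simpl in *; auto.
  - split; [apply IHchi1|apply IHchi2]; tauto.
  - split; [apply IHchi1|apply IHchi2]; tauto.
  - destruct (Nat.eq_dec x y); auto. right; split; [tauto| apply IHchi; tauto].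
  - destruct (Nat.eq_dec x y); auto. right; split; [tauto| apply IHchi; tauto].
Qed.

Lemma free_occ_of_free_sub : forall psi r, free_sub psi r -> free_occ psi r.
Proof.
  intros psi r [chi [y [-> [Hf Hff]]]].
  revert Hf Hff. induction chi; simpl; intros Hf Hff; try contradiction.
  - subst. rewrite Nat.eqb_refl. constructor.
  - destruct Hff. destruct Hf; [apply fo_andl|apply fo_andr]; auto.
  - destruct Hff. destruct Hf; [apply fo_orl|apply fo_orr]; auto.
  - constructor; auto.
  - constructor; auto.
  - destruct Hf as [Hne Hf]. destruct (Nat.eqb_spec x y); [congruence|].
    destruct Hff as [Heq|[Hn Hff]]; [congruence|]. constructor; auto.
  - destruct Hf as [Hne Hf]. destruct (Nat.eqb_spec x y); [congruence|].
    destruct Hff as [Heq|[Hn Hff]]; [congruence|]. constructor; auto.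
Qed.

Fixpoint max_var (f : form) : nat :=
  match f with
  | FVar x => x
  | FAnd a b | FOr a b => max (max_var a) (max_var b)
  | FDia a | FBox a => max_var a
  | FMu x a | FNu x a => max x (max_var a)
  | _ => 0
  end.

Lemma max_var_fresh : forall f y, max_var f < y -> ~ free_in y f /\ ~ bound_in y f.
Proof.
  induction f; intros y H; simpl in *.
  all: try (split; intro; lia).
  all: try (specialize (IHf1 y ltac:(lia)); specialize (IHf2 y ltac:(lia)); tauto).
  all: try (specialize (IHf y ltac:(lia)); tauto).
  all: specialize (IHf y ltac:(lia));
       split; [intros [A B]; tauto | intros [A|A]; [lia|tauto]].
Qed.

(* A free occurrence is a free subformula: abstract it by a fresh variable. *)
Lemma free_occ_context : forall psi r, free_occ psi r -> forall y, max_var r < y ->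
  exists chi, r = subst chi psi y /\ free_in y chi /\ free_for psi y chi.
Proof.
  intros psi r G. induction G; intros y Hy; simpl in Hy.
  1: exists (FVar y); simpl; rewrite Nat.eqb_refl; auto.
  all: destruct (IHG y ltac:(lia)) as [c [E [F1 F2]]]; subst.
  - destruct (max_var_fresh b y ltac:(lia)) as [Nb _].
    exists (FAnd c b); simpl; rewrite (subst_notfree b) by auto.
    repeat split; auto using free_for_notfree.
  - destruct (max_var_fresh a y ltac:(lia)) as [Na _].
    exists (FAnd a c); simpl; rewrite (subst_notfree a) by auto.
    repeat split; auto using free_for_notfree.
  - destruct (max_var_fresh b y ltac:(lia)) as [Nb _].
    exists (FOr c b); simpl; rewrite (subst_notfree b) by auto.
    repeat split; auto using free_for_notfree.
  - destruct (max_var_fresh a y ltac:(lia)) as [Na _].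
    exists (FOr a c); simpl; rewrite (subst_notfree a) by auto.
    repeat split; auto using free_for_notfree.
  - exists (FDia c); simpl; auto.
  - exists (FBox c); simpl; auto.
  - exists (FMu x c); simpl. destruct (Nat.eqb_spec x y); [lia|].
    repeat split; auto; right; split; auto.
  - exists (FNu x c); simpl. destruct (Nat.eqb_spec x y); [lia|].
    repeat split; auto; right; split; auto.
Qed.

Lemma free_sub_of_free_occ : forall psi r, free_occ psi r -> free_sub psi r.
Proof.
  intros psi r G.
  destruct (free_occ_context _ _ G (S (max_var r)) ltac:(lia)) as [c H].
  exists c, (S (max_var r)); auto.
Qed.

Lemma free_occ_free_in : forall b psi, free_occ b psi -> forall v, free_in v b -> free_in v psi.
Proof.
  intros b psi G; induction G; intros v Hv; simpl; auto.
  - split; auto. intro; subst; auto.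
  - split; auto. intro; subst; auto.
Qed.

Lemma free_occ_trans : forall b psi r, free_occ b psi -> free_occ psi r -> free_occ b r.
Proof.
  intros b psi r G1 G2; induction G2; [exact G1|..]; try (constructor; auto; fail).
  - constructor; auto. intro Hx; apply H; eapply free_occ_free_in; eauto.
  - constructor; auto. intro Hx; apply H; eapply free_occ_free_in; eauto.
Qed.

Lemma free_occ_size : forall t r, free_occ t r -> fsize t <= fsize r /\ (fsize t = fsize r -> t = r).
Proof. intros t r G; induction G; simpl; split; intros; try lia; auto. Qed.

Lemma sub_size : forall t r, sub t r -> fsize t <= fsize r /\ (fsize t = fsize r -> t = r).
Proof. intros t r G; induction G; simpl; split; intros; try lia; auto. Qed.

(* Depth-indexed free occurrences: the depth is invariant under substitution
   for a variable not free in t, which makes unfolding steps harmless. *)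
Inductive free_occ_at (t : form) : nat -> form -> Prop :=
| foa_refl : free_occ_at t 0 t
| foa_andl n a b : free_occ_at t n a -> free_occ_at t (S n) (FAnd a b)
| foa_andr n a b : free_occ_at t n b -> free_occ_at t (S n) (FAnd a b)
| foa_orl n a b : free_occ_at t n a -> free_occ_at t (S n) (FOr a b)
| foa_orr n a b : free_occ_at t n b -> free_occ_at t (S n) (FOr a b)
| foa_dia n a : free_occ_at t n a -> free_occ_at t (S n) (FDia a)
| foa_box n a : free_occ_at t n a -> free_occ_at t (S n) (FBox a)
| foa_mu n x a : ~ free_in x t -> free_occ_at t n a -> free_occ_at t (S n) (FMu x a)
| foa_nu n x a : ~ free_in x t -> free_occ_at t n a -> free_occ_at t (S n) (FNu x a).

Lemma free_occ_depth : forall t r, free_occ t r -> exists n, free_occ_at t n r.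
Proof.
  intros t r G; induction G; [exists 0; constructor|..]; destruct IHG as [n Hn];
    exists (S n); first [apply foa_andr; now auto | apply foa_orr; now auto | constructor; now auto].
Qed.

Lemma free_occ_at_subst : forall t n a, free_occ_at t n a ->
  forall u z, ~ free_in z t -> free_occ_at t n (subst a u z).
Proof.
  intros t n a G; induction G; intros u z Hz; simpl.
  1: (rewrite subst_notfree by auto; constructor).
  all: try (first [apply foa_andr; now auto | apply foa_orr; now auto | constructor; now auto]).
  all: match goal with |- context[Nat.eqb ?x ?z] => destruct (Nat.eqb_spec x z) end;
       constructor; auto.
Qed.

Lemma free_occ_at_steps : forall n t r, free_occ_at t n r -> steps r t.
Proof.
  induction n as [n IH] using lt_wf_ind. intros t r G.
  inversion G; subst.
  1: apply rt_refl.
  all: match goal with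
  | H : free_occ_at _ ?m ?a, Hx : ~ free_in ?x _ |- steps (FMu ?x ?a) ?t =>
      apply rt_trans with (subst a (FMu x a) x);
      [apply rt_step, st_mu|apply (IH m); [lia|apply free_occ_at_subst; auto]]
  | H : free_occ_at _ ?m ?a, Hx : ~ free_in ?x _ |- steps (FNu ?x ?a) ?t =>
      apply rt_trans with (subst a (FNu x a) x);
      [apply rt_step, st_nu|apply (IH m); [lia|apply free_occ_at_subst; auto]]
  | H : free_occ_at _ ?m ?a |- steps ?r ?t =>
      apply rt_trans with a; [apply rt_step; constructor|apply (IH m); [lia|auto]]
  end.
Qed.

Lemma free_occ_steps : forall t r, free_occ t r -> steps r t.
Proof.
  intros t r G; destruct (free_occ_depth _ _ G) as [n Hn]; eapply free_occ_at_steps; eauto.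
Qed.

Lemma tr_in_steps : forall psi r s, tr_in psi r s -> steps r s.
Proof.
  intros psi r s H; induction H; [apply rt_refl|eapply rt_trans; [apply rt_step|]; eauto].
Qed.

Lemma tr_in_last : forall psi r s, tr_in psi r s -> free_sub psi s.
Proof. intros psi r s H; induction H; auto. Qed.

Lemma tr_in_app : forall psi r s u, tr_in psi r s -> tr_in psi s u -> tr_in psi r u.
Proof. intros psi r s u H; induction H; intros; auto. econstructor; eauto. Qed.

Lemma tr_in_mono : forall psi phi r s, free_occ phi psi -> tr_in psi r s -> tr_in phi r s.
Proof.
  intros psi phi r s G H; induction H; [constructor|econstructor; eauto].
  all: apply free_sub_of_free_occ; eapply free_occ_trans; eauto using free_occ_of_free_sub.
Qed.

Lemma sqle_free_occ : forall a b, sqle a b -> free_occ b a.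
Proof. intros a b (_&_&H). apply free_occ_of_free_sub. eapply tr_in_last; eauto. Qed.

Lemma sqle_trans : forall a b c, sqle a b -> sqle b c -> sqle a c.
Proof.
  intros a b c H1 H2. pose proof (sqle_free_occ _ _ H2) as G.
  destruct H1 as (Fa&Fb&T1); destruct H2 as (_&Fc&T2). split; [|split]; auto.
  eapply tr_in_app; eauto. eapply tr_in_mono; eauto.
Qed.

(* Antisymmetry: b occurs freely in a, so it is no larger than a. *)
Lemma sqle_antisym : forall a b, sqle a b -> sqle b a -> a = b.
Proof.
  intros a b H1 H2. apply sqle_free_occ, free_occ_size in H1.
  apply sqle_free_occ, free_occ_size in H2. symmetry; apply H1; lia.
Qed.

Lemma sqlt_trans : forall a b c, sqlt a b -> sqlt b c -> sqlt a c.
Proof.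
  intros a b c [H1 N1] [H2 N2]. split; [eapply sqle_trans; eauto|].
  intro H3. apply N2. eapply sqle_trans; eauto.
Qed.

Lemma sqle_steps : forall a b, sqle a b -> steps a b /\ steps b a.
Proof.
  intros a b H. split; [apply free_occ_steps, sqle_free_occ; auto|].
  destruct H as (_&_&H); eapply tr_in_steps; eauto.
Qed.

Lemma sqlt_size : forall a b, sqlt a b -> fsize b < fsize a.
Proof.
  intros a b [H1 H2]. destruct (free_occ_size _ _ (sqle_free_occ _ _ H1)) as [S1 S2].
  destruct (Nat.eq_dec (fsize b) (fsize a)) as [E|]; [|lia].
  specialize (S2 E). subst. contradiction.
Qed.

Ltac case_eqb := match goal with
  | H : context[Nat.eqb ?a ?b] |- _ => destruct (Nat.eqb_spec a b)
  | |- context[Nat.eqb ?a ?b] => destruct (Nat.eqb_spec a b)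
  end.

Lemma bound_subst : forall b t x v, bound_in v (subst b t x) -> bound_in v b \/ bound_in v t.
Proof.
  induction b; intros t y v H; simpl in *; repeat case_eqb; simpl in *; try tauto.
  all: try (destruct H as [H|H]; [destruct (IHb1 _ _ _ H)|destruct (IHb2 _ _ _ H)]; tauto).
  all: try (apply IHb in H; tauto).
  all: destruct H as [H|H]; [tauto|destruct (IHb _ _ _ H); tauto].
Qed.

Lemma free_subst : forall b t x v, free_in v (subst b t x) -> (free_in v b /\ v <> x) \/ free_in v t.
Proof.
  induction b; intros t y v H; simpl in *; repeat case_eqb; simpl in *; subst; try tauto.
  all: try (destruct H as [H|H]; [destruct (IHb1 _ _ _ H)|destruct (IHb2 _ _ _ H)]; tauto).
  all: try (left; split; [tauto|intro; subst; tauto]).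
  all: try (apply IHb in H; tauto).
  all: destruct H as [H1 H]; destruct (IHb _ _ _ H); tauto.
Qed.

Lemma step_bound : forall g h, step g h -> forall v, bound_in v h -> bound_in v g.
Proof.
  intros g h S v H; destruct S; simpl; auto;
  destruct (bound_subst _ _ _ _ H); simpl in *; tauto.
Qed.

Lemma step_free : forall g h, step g h -> forall v, free_in v h -> free_in v g.
Proof.
  intros g h S v H; destruct S; simpl; auto;
  destruct (free_subst _ _ _ _ H) as [[A B]|A]; simpl in *; try tauto; split; auto.
Qed.

Lemma steps_bound : forall g h, steps g h -> forall v, bound_in v h -> bound_in v g.
Proof. intros g h S; induction S; eauto using step_bound. Qed.

Lemma steps_free : forall g h, steps g h -> forall v, free_in v h -> free_in v g.
Proof. intros g h S; induction S; eauto using step_free. Qed.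

Lemma tidy_steps : forall g h, steps g h -> tidy g -> tidy h.
Proof. intros g h S T v [F B]. apply (T v); eauto using steps_free, steps_bound. Qed.

Lemma var_subst : forall b t x y, ~ bound_in y b -> ~ free_in y b ->
  subst (subst b (FVar y) x) t y = subst b t x.
Proof.
  induction b; intros t z y Hb Hf; simpl in *; auto.
  - destruct (Nat.eqb_spec x z); simpl. rewrite Nat.eqb_refl; auto.
    destruct (Nat.eqb_spec x y); [subst; tauto|auto].
  - rewrite IHb1, IHb2; tauto.
  - rewrite IHb1, IHb2; tauto.
  - rewrite IHb; tauto.
  - rewrite IHb; tauto.
  - destruct (Nat.eqb_spec x z); simpl; destruct (Nat.eqb_spec x y); try (subst; tauto).
    + subst. rewrite subst_notfree; auto.
    + rewrite IHb; auto.
  - destruct (Nat.eqb_spec x z); simpl; destruct (Nat.eqb_spec x y); try (subst; tauto).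
    + subst. rewrite subst_notfree; auto.
    + rewrite IHb; auto.
Qed.

Lemma subst_comm : forall g c f z y, ~ bound_in y g -> ~ free_in z f -> z <> y ->
  subst (subst g c z) f y = subst (subst g f y) (subst c f y) z.
Proof.
  induction g; intros c f z y Hb Hf Hzy; simpl in *; repeat (case_eqb; simpl in *); subst;
  try congruence; try tauto.
  all: try (rewrite subst_notfree; auto; fail).
  all: try (rewrite IHg1, IHg2 by tauto; auto; fail).
  all: try (rewrite IHg by tauto; auto; fail).
Qed.

Lemma fsize_var_subst : forall b x y, fsize (subst b (FVar y) x) = fsize b.
Proof.
  induction b; intros z y; simpl; auto; destruct (Nat.eqb x z); simpl; auto.
Qed.

Lemma step_subst : forall c f y h, c <> FVar y -> ~ bound_in y c ->
  (forall z, bound_in z c -> ~ free_in z f) ->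
  step (subst c f y) h -> exists c', step c c' /\ h = subst c' f y.
Proof.
  intros c f y h Hc Hy Hb S; destruct c; simpl in *; try (inversion S; fail).
  1: case_eqb; [subst; contradiction|inversion S].
  1-4: inversion S; subst; eexists; (split; [|reflexivity]); constructor.
  all: case_eqb; [tauto|]; inversion S; subst; eexists; split; [first [apply st_mu|apply st_nu]|].
  all: symmetry; rewrite subst_comm; [|tauto|apply Hb; auto|auto].
  all: simpl; case_eqb; [tauto|reflexivity].
Qed.

Lemma steps_inv : forall f g, steps f g -> g = f \/ exists h, step f h /\ steps h g.
Proof.
  intros f g H. apply clos_rt_rt1n in H. destruct H; auto.
  right; exists y; split; auto. apply clos_rt1n_rt; auto.
Qed.

Lemma steps_invariant : forall (P : form -> Prop), (forall g h, P g -> step g h -> P h) ->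
  forall g h, steps g h -> P g -> P h.
Proof. intros P HP g h S; induction S; eauto. Qed.

Definition finite_closure (f : form) : Prop := exists L, forall g, steps f g -> In g L.

Lemma finite_closure_succ : forall f a b, (forall h, step f h -> h = a \/ h = b) ->
  finite_closure a -> finite_closure b -> finite_closure f.
Proof.
  intros f a b Hs [La Ha] [Lb Hb]. exists (f :: La ++ Lb). intros g Sg.
  destruct (steps_inv _ _ Sg) as [->|[h [Sh Sh']]]; [left; auto|right].
  apply in_or_app. destruct (Hs h Sh); subst; auto.
Qed.

Lemma finite_closure_atom : forall f, (forall h, ~ step f h) -> finite_closure f.
Proof.
  intros f N. exists [f]. intros g Sg.
  destruct (steps_inv _ _ Sg) as [->|[h [Sh _]]]; [left; auto|destruct (N h Sh)].
Qed.

(* The closure of a tidy fixpoint formula f = eta x.b: with y fresh, every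
   member other than f is c[f/y] for some c in the closure of b[y/x]. *)
Lemma finite_closure_fix : forall f x b, (f = FMu x b \/ f = FNu x b) -> tidy f ->
  (forall b', fsize b' = fsize b -> tidy b' -> finite_closure b') -> finite_closure f.
Proof.
  intros f x b Ef T IH.
  assert (Hfree : forall v, free_in v f <-> x <> v /\ free_in v b)
    by (destruct Ef; subst; reflexivity).
  assert (Hbound : forall v, bound_in v f <-> x = v \/ bound_in v b)
    by (destruct Ef; subst; reflexivity).
  assert (Hunf : forall h, step f h -> h = subst b f x)
    by (destruct Ef; subst; intros h S; inversion S; auto).
  set (y := S (max_var f)).
  destruct (max_var_fresh f y ltac:(unfold y; lia)) as [Fy By].
  assert (Hxy : x <> y) by (intros <-; apply By, Hbound; auto).
  assert (Fyb : ~ free_in y b) by (intro; apply Fy, Hfree; auto).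
  assert (Byb : ~ bound_in y b) by (intro; apply By, Hbound; auto).
  set (b' := subst b (FVar y) x).
  assert (BB : forall v, bound_in v b' -> bound_in v b).
  { intros v Hv. destruct (bound_subst _ _ _ _ Hv); simpl in *; tauto. }
  assert (Tb' : tidy b').
  { intros v [H1 H2]. apply BB in H2. destruct (free_subst _ _ _ _ H1) as [[H3 H4]|H3].
    - apply (T v); split; [apply Hfree|apply Hbound]; auto.
    - simpl in H3; subst; auto. }
  destruct (IH b' (fsize_var_subst _ _ _) Tb') as [L HL].
  exists (f :: map (fun c => subst c f y) L).
  set (Inv := fun g => g = f \/ exists c, steps b' c /\ g = subst c f y).
  assert (Hf : forall h, step f h -> Inv h).
  { intros h S. right. exists b'. split; [apply rt_refl|].
    rewrite (Hunf h S). unfold b'. rewrite var_subst; auto. }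
  assert (Cl : forall g h, Inv g -> step g h -> Inv h).
  { intros g h [->|[c [Sc ->]]] S; [auto|].
    destruct (classic (c = FVar y)) as [->|Hc].
    { simpl in S. rewrite Nat.eqb_refl in S. auto. }
    destruct (step_subst c f y h Hc) as [c' [Sc' ->]]; [| |exact S|].
    - intro Hy. apply Byb, BB. eapply steps_bound; eauto.
    - intros z Hz Fz. apply (T z). split; [exact Fz|].
      apply Hbound; right; apply BB; eapply steps_bound; eauto.
    - right. exists c'. split; [eapply rt_trans; [exact Sc|apply rt_step; exact Sc']|auto]. }
  intros g Sg. assert (Ig : Inv g) by (eapply steps_invariant; eauto; left; auto).
  destruct Ig as [->|[c [Sc ->]]]; [left; auto|right]. apply (in_map (fun c => subst c f y)); auto.
Qed.

(* Closures of tidy formulas are finite (induction on the size; renaming the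
   bound variable of a fixpoint formula preserves its size). *)
Lemma tidy_finite_closure : forall f, tidy f -> finite_closure f.
Proof.
  assert (H : forall n f, fsize f <= n -> tidy f -> finite_closure f).
  { induction n; intros f Hs T; [destruct f; simpl in Hs; lia|].
    assert (Tsucc : forall h, step f h -> tidy h)
      by (intros h S; apply (tidy_steps f); [apply rt_step|]; auto).
    destruct f; simpl in Hs.
    all: try (apply finite_closure_atom; intros h S; inversion S; fail).
    1-2: apply (finite_closure_succ _ f1 f2);
      [intros h S; inversion S; auto|apply IHn; [lia|apply Tsucc; constructor]..].
    1-2: apply (finite_closure_succ _ f f);
      [intros h S; inversion S; auto|apply IHn; [lia|apply Tsucc; constructor]..].
    all: eapply finite_closure_fix; eauto; intros b' E Tb'; apply IHn; auto; lia. }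
  intros f; apply (H (fsize f)); auto.
Qed.

Lemma sub_trans : forall a b c, sub a b -> sub b c -> sub a c.
Proof.
  intros a b c H1 H2; induction H2; auto.
  all: first [apply sub_andr; now auto | apply sub_orr; now auto | constructor; now auto].
Qed.

Lemma sub_free_subst : forall g u x, free_in x g -> sub u (subst g u x).
Proof.
  induction g; intros u y H; simpl in *; try contradiction.
  - subst. rewrite Nat.eqb_refl. constructor.
  - destruct H; [apply sub_andl|apply sub_andr]; auto.
  - destruct H; [apply sub_orl|apply sub_orr]; auto.
  - constructor; auto.
  - constructor; auto.
  - destruct H. destruct (Nat.eqb_spec x y); [congruence|]. constructor; auto.
  - destruct H. destruct (Nat.eqb_spec x y); [congruence|]. constructor; auto.
Qed.

Lemma sub_subst_cases : forall b t u x, sub t (subst b u x) ->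
  sub t u \/ sub t b \/ exists g, t = subst g u x /\ free_in x g.
Proof.
  assert (Whole : forall b u x, sub (subst b u x) u \/ sub (subst b u x) b \/
                   exists g, subst b u x = subst g u x /\ free_in x g).
  { intros b u x. destruct (classic (free_in x b)) as [F|NF]; [right; right; eauto|].
    right; left. rewrite subst_notfree; auto. constructor. }
  induction b; intros t u y H.
  all: try (inversion H; subst; right; left; constructor; fail).
  1: simpl in H; destruct (Nat.eqb_spec x y); subst; auto;
     inversion H; subst; right; left; constructor.
  5-6: destruct (Nat.eqb_spec x y) as [|Hxy]; [simpl in H; subst; rewrite Nat.eqb_refl in H; auto|].
  5: assert (E : subst (FMu x b) u y = FMu x (subst b u y)) by (simpl; case_eqb; tauto).
  6: assert (E : subst (FNu x b) u y = FNu x (subst b u y)) by (simpl; case_eqb; tauto).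
  5-6: rewrite E in H; inversion H; subst; [rewrite <- E; apply Whole|].
  1-4: inversion H; subst; [apply Whole|..].
  all: match goal with
       | Hs : sub _ (subst _ _ _) |- _ =>
           first [destruct (IHb _ _ _ Hs) as [?|[?|?]] | destruct (IHb1 _ _ _ Hs) as [?|[?|?]]
                 | destruct (IHb2 _ _ _ Hs) as [?|[?|?]]]
       end.
  all: try (left; auto; fail); try (right; right; auto; fail).
  all: right; left; first [apply sub_andr; now auto | apply sub_orr; now auto | constructor; now auto].
Qed.

Lemma step_back : forall r s t, step r s -> sub t s -> sub t r \/ (sub r t /\ is_fix r).
Proof.
  intros r s t S H. destruct S.
  all: try (left; eapply sub_trans; [exact H|];
            first [apply sub_andr; constructor | apply sub_orr; constructor | constructor; constructor]; fail).
  - destruct (sub_subst_cases _ _ _ _ H) as [?|[?|[g [-> F]]]]; [left; auto|left; constructor; auto|].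
    right; split; [apply sub_free_subst; auto| exists MuT; reflexivity].
  - destruct (sub_subst_cases _ _ _ _ H) as [?|[?|[g [-> F]]]]; [left; auto|left; constructor; auto|].
    right; split; [apply sub_free_subst; auto| exists NuT; reflexivity].
Qed.

Lemma exists_min_measure : forall (P : form -> Prop) (m : form -> nat), (exists a, P a) ->
  exists a, P a /\ forall b, P b -> m a <= m b.
Proof.
  intros P m [a Ha].
  assert (H : forall n a, m a = n -> P a -> exists a, P a /\ forall b, P b -> m a <= m b).
  { induction n as [n IH] using lt_wf_ind. intros a0 E Pa.
    destruct (classic (exists b, P b /\ m b < m a0)) as [[b [Pb Lb]]|N].
    - eapply (IH (m b)); eauto; lia.
    - exists a0; split; auto. intros b Pb. destruct (Nat.le_gt_cases (m a0) (m b)); auto.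
      exfalso; apply N; eauto. }
  eapply H; eauto.
Qed.

Lemma sub_free_occ : forall t r, sub t r -> (forall v, free_in v t -> ~ bound_in v r) -> free_occ t r.
Proof.
  intros t r S; induction S; intros H; [constructor|..].
  all: constructor; [try (intro Hx; apply (H _ Hx); simpl; auto)|..];
       apply IHS; intros v Hv Hb; apply (H v Hv); simpl; auto.
Qed.

Lemma cluster_trans : forall phi f g, cluster phi f -> steps f g -> steps g phi -> cluster phi g.
Proof. intros phi f g [S1 S2] Sfg Sg. split; [eapply rt_trans; eauto|auto]. Qed.

Section Top.
Variable phi : form.
Variable T : form.
Hypothesis CT : cluster phi T.
Hypothesis FT : is_fix T.
Hypothesis MT : forall a, cluster phi a -> is_fix a -> fsize T <= fsize a.

(* The top is a subformula of every member: look back along a trace from T. *)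
Lemma top_sub : forall r, cluster phi r -> sub T r.
Proof.
  intros r Cr.
  assert (R : steps r T) by (eapply rt_trans; [apply Cr|apply CT]).
  assert (R' : steps T r) by (eapply rt_trans; [apply CT|apply Cr]).
  clear Cr. apply clos_rt_rt1n in R. remember T as T0 eqn:ET.
  induction R as [|r r' s S R IH]; [subst; constructor|]. subst s.
  assert (Hr' : sub T r').
  { apply IH; auto. eapply rt_trans; [exact R'|apply rt_step; auto]. }
  destruct (step_back _ _ _ S Hr') as [?|[Sr Fr]]; auto.
  assert (Cr : cluster phi r).
  { split. eapply rt_trans; [apply CT|exact R'].
    eapply rt_trans; [apply rt_step; exact S|].
    eapply rt_trans; [apply clos_rt1n_rt; exact R|apply CT]. }
  specialize (MT r Cr Fr). destruct (sub_size _ _ Sr) as [L E].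
  rewrite (E ltac:(lia)). constructor.
Qed.

Hypothesis Td : forall f, cluster phi f -> tidy f.

(* By tidiness, that occurrence is free. *)
Lemma top_free_occ : forall r, cluster phi r -> free_occ T r.
Proof.
  intros r Cr. apply sub_free_occ; [apply top_sub; auto|].
  intros v Hv Hb. apply (Td r Cr v). split; auto.
  eapply steps_free; [|exact Hv]. eapply rt_trans; [apply Cr|apply CT].
Qed.

(* Every trace inside the cluster keeps T free, so T is above everything. *)
Lemma top_sqle : forall a, cluster phi a -> is_fix a -> sqle a T.
Proof.
  intros a Ca Fa. split; [|split]; auto.
  assert (R : steps T a) by (eapply rt_trans; [apply CT|apply Ca]).
  apply clos_rt_rt1n in R.
  assert (G : forall s, clos_refl_trans_1n form step s a -> cluster phi s -> tr_in T s a).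
  { intros s R0; induction R0 as [s|s s' u S R0 IH]; intros Cs.
    - constructor. apply free_sub_of_free_occ, top_free_occ; auto.
    - econstructor; [apply free_sub_of_free_occ, top_free_occ; auto|exact S|].
      apply IH; auto. apply (cluster_trans phi s); [auto|apply rt_step; auto|].
      eapply rt_trans; [apply clos_rt1n_rt; exact R0|apply Ca]. }
  apply G; auto.
Qed.
End Top.

Definition round_up (e : fp) (d : Z) : Z :=
  match e with
  | MuT => if Z.odd d then d else (d + 1)%Z
  | NuT => if Z.odd d then (d + 1)%Z else d
  end.

Lemma Omega_eq : forall f e, ftype f = Some e ->
  Omega_g f = Some (round_up e (Z.of_nat (cd (cluster f)) - Z.of_nat (h_up f))).
Proof. intros f e H. unfold Omega_g. rewrite H. destruct e; reflexivity. Qed.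

Lemma Omega_is_fix : forall f k, Omega_g f = Some k -> is_fix f.
Proof. intros f k H. unfold Omega_g in H. destruct (ftype f) eqn:E; [exists f0; auto|discriminate]. Qed.

Lemma odd_succ : forall d, Z.odd (d + 1) = negb (Z.odd d).
Proof. intros d. rewrite Z.add_1_r, Z.odd_succ, <- Z.negb_odd. reflexivity. Qed.

Lemma odd_cases : forall d, exists q, (d = 2*q /\ Z.odd d = false)%Z \/ (d = 2*q+1 /\ Z.odd d = true)%Z.
Proof.
  intros d. exists (Z.div2 d). pose proof (Zdiv2_odd_eqn d).
  destruct (Z.odd d); [right|left]; split; auto; lia.
Qed.

Lemma round_up_parity : forall e d, has_parity e (round_up e d).
Proof.
  intros e d. destruct e; simpl; destruct (Z.odd d) eqn:O; simpl; rewrite ?odd_succ, ?O; auto.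
Qed.

Lemma round_up_mono : forall e d1 d2, (d1 <= d2)%Z -> (round_up e d1 <= round_up e d2)%Z.
Proof.
  intros e d1 d2 H. destruct (odd_cases d1) as [q1 [[E1 O1]|[E1 O1]]];
  destruct (odd_cases d2) as [q2 [[E2 O2]|[E2 O2]]]; destruct e; simpl; rewrite O1, O2; lia.
Qed.

Lemma round_up_strict : forall e e' d1 d2, e <> e' -> (d1 < d2)%Z ->
  (round_up e d1 < round_up e' d2)%Z.
Proof.
  intros e e' d1 d2 Hn H. destruct (odd_cases d1) as [q1 [[E1 O1]|[E1 O1]]];
  destruct (odd_cases d2) as [q2 [[E2 O2]|[E2 O2]]]; destruct e, e'; try congruence;
  simpl; rewrite O1, O2; lia.
Qed.

Lemma round_up_shift : forall e d s, has_parity e (d + s) ->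
  round_up e d = (d + if Z.odd s then 1 else 0)%Z.
Proof.
  intros e d s H. destruct e; simpl in *; rewrite Z.odd_add in H;
  destruct (Z.odd d), (Z.odd s); simpl in *; try discriminate; lia.
Qed.

Lemma has_parity_bar : forall e z, has_parity (fp_bar e) z -> has_parity e (z + 1).
Proof. intros [] z H; simpl in *; rewrite odd_succ, H; reflexivity. Qed.

Lemma has_parity_odd : forall e z z', Z.odd z = Z.odd z' -> has_parity e z -> has_parity e z'.
Proof. intros [] z z' E H; simpl in *; congruence. Qed.

Lemma other_type : forall e e', e <> e' -> e' = fp_bar e.
Proof. intros [] [] H; simpl; congruence. Qed.

Lemma cluster_eq : forall phi c, cluster phi c -> cluster c = cluster phi.
Proof.
  intros phi c [S1 S2]. apply functional_extensionality; intros g.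
  apply propositional_extensionality. unfold cluster, equivC.
  split; intros [A B]; split; eapply rt_trans; eauto.
Qed.

Lemma maxnat_spec : forall (P : nat -> Prop) B, (exists n, P n) -> (forall n, P n -> n <= B) ->
  P (maxnat P) /\ forall m, P m -> m <= maxnat P.
Proof.
  intros P B [n Pn] HB.
  assert (Ex : exists n, P n /\ forall m, P m -> m <= n).
  { assert (H : forall k n, B - n = k -> P n -> exists n, P n /\ forall m, P m -> m <= n).
    { induction k as [k IH] using lt_wf_ind. intros n0 E P0.
      destruct (classic (exists m, P m /\ n0 < m)) as [[m [Pm Lm]]|N].
      - apply (IH (B - m)) with m; auto. pose proof (HB m Pm). pose proof (HB n0 P0). lia.
      - exists n0; split; auto. intros m Pm. destruct (Nat.le_gt_cases m n0); auto.
        exfalso; apply N; eauto. }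
    eapply H; eauto. }
  unfold maxnat. apply (epsilon_spec (inhabits 0) (fun n => P n /\ forall m, P m -> m <= n)). auto.
Qed.

Lemma maxnat_eq : forall (P : nat -> Prop) n, P n -> (forall m, P m -> m <= n) -> maxnat P = n.
Proof.
  intros P n Pn H. destruct (maxnat_spec P n) as [A B]; eauto.
  specialize (H _ A). specialize (B _ Pn). lia.
Qed.

Lemma alt_chain_head : forall a l, alt_chain (a :: l) -> tidy_fix a.
Proof. intros a l H; destruct l; simpl in *; tauto. Qed.

Lemma alt_chain_tail : forall a l, alt_chain (a :: l) -> alt_chain l.
Proof. intros a l H; destruct l; simpl in *; tauto. Qed.

Lemma chain_sizes : forall l a, alt_chain (a :: l) -> Forall (fun b => fsize b < fsize a) l.
Proof.
  induction l as [|b l IH]; intros a H; constructor.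
  - destruct H as (_&H&_). apply sqlt_size; auto.
  - destruct H as (_&H1&_&H2). specialize (IH b H2). apply sqlt_size in H1.
    eapply Forall_impl; [|exact IH]. simpl; intros; lia.
Qed.

Lemma chain_len : forall l a, alt_chain (a :: l) -> length (a :: l) <= fsize a.
Proof.
  induction l as [|b l IH]; intros a H; simpl.
  - destruct a; simpl; lia.
  - destruct H as (_&H1&_&H2). specialize (IH b H2). apply sqlt_size in H1. simpl in IH. lia.
Qed.

Lemma chain_nodup : forall l, alt_chain l -> NoDup l.
Proof.
  induction l as [|a l IH]; intros H; constructor.
  - intro Hin. pose proof (chain_sizes _ _ H) as F. rewrite Forall_forall in F.
    specialize (F a Hin). lia.
  - apply IH. eapply alt_chain_tail; eauto.
Qed.

Lemma chain_cluster : forall phi l a, alt_chain (a :: l) -> cluster phi a -> Forall (cluster phi) l.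
Proof.
  intros phi; induction l as [|b l IH]; intros a H Ca; constructor;
    destruct H as (_&[H _]&_&H2); destruct (sqle_steps _ _ H) as [S1 S2].
  - apply (cluster_trans phi a); auto. eapply rt_trans; [exact S2|apply Ca].
  - apply (IH b H2). apply (cluster_trans phi a); auto. eapply rt_trans; [exact S2|apply Ca].
Qed.

(* h_up is attained (chains from xi are bounded by its size). *)
Lemma h_up_spec : forall xi, tidy_fix xi ->
  (exists l, alt_chain (xi :: l) /\ length (xi :: l) = h_up xi) /\
  forall l, alt_chain (xi :: l) -> length (xi :: l) <= h_up xi.
Proof.
  intros xi T.
  destruct (maxnat_spec (fun n => exists l, alt_chain (xi :: l) /\ length (xi :: l) = n) (fsize xi))
    as [[l [Ch Len]] M].
  - exists 1, []. simpl; auto.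
  - intros n [l [H <-]]. apply chain_len; auto.
  - split; [exists l; auto|]. intros l' Ch'. apply M. eauto.
Qed.

Lemma h_up_ge1 : forall xi, tidy_fix xi -> 1 <= h_up xi.
Proof. intros xi T. apply (proj2 (h_up_spec xi T) []). simpl; auto. Qed.

(* Prepending to a maximal chain: a strictly alternating step raises h_up. *)
Lemma h_up_step : forall a b, tidy_fix a -> tidy_fix b -> sqlt a b ->
  (forall e, ftype a = Some e -> ftype b = Some (fp_bar e)) -> S (h_up b) <= h_up a.
Proof.
  intros a b Ta Tb Lt Alt. destruct (proj1 (h_up_spec b Tb)) as [l [Ch Len]].
  rewrite <- Len. apply (proj2 (h_up_spec a Ta) (b :: l)). simpl; auto.
Qed.

(* Replacing the head of a chain by a lower formula of the same type. *)
Lemma h_up_same_type : forall a b, tidy_fix a -> tidy_fix b -> sqlt a b ->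
  ftype a = ftype b -> h_up b <= h_up a.
Proof.
  intros a b Ta Tb Lt Et. destruct (proj1 (h_up_spec b Tb)) as [[|c l] [Ch Len]].
  - simpl in Len. pose proof (h_up_ge1 a Ta). lia.
  - rewrite <- Len. apply (proj2 (h_up_spec a Ta) (c :: l)).
    destruct Ch as (_&Lbc&Alt&Ch). split; [exact Ta|split; [eapply sqlt_trans; eauto|]].
    split; [rewrite Et; exact Alt|exact Ch].
Qed.

Fixpoint countdown (n : nat) : list nat :=
  match n with 0 => [] | S k => S k :: countdown k end.

Lemma in_countdown : forall n h, In h (countdown n) <-> 1 <= h <= n.
Proof.
  induction n as [|n IH]; intros h; simpl; [lia|]. rewrite IH. lia.
Qed.

Lemma maximal_chain_heights : forall l a, alt_chain (a :: l) -> h_up a = length (a :: l) ->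
  map h_up (a :: l) = countdown (length (a :: l)).
Proof.
  induction l as [|b l IH]; intros a Ch Ha; simpl in *; [rewrite Ha; reflexivity|].
  destruct Ch as (Ta&Lt&Alt&Ch). pose proof (alt_chain_head _ _ Ch) as Tb.
  assert (Hb : h_up b = length (b :: l)).
  { pose proof (proj2 (h_up_spec b Tb) l Ch). pose proof (h_up_step a b Ta Tb Lt Alt).
    simpl in *. lia. }
  rewrite Ha. f_equal. apply (IH b Ch Hb).
Qed.

Lemma alt_incr_tail : forall k t, alt_incr (k :: t) -> alt_incr t.
Proof. intros k t H; destruct t; simpl in *; tauto. Qed.

Lemma alt_incr_sorted : forall t k, alt_incr (k :: t) -> Forall (fun x => (k < x)%Z) t.
Proof.
  induction t as [|x t IH]; intros k H; constructor.
  - destruct H; lia.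
  - destruct H as (H1&_&H2). specialize (IH x H2). eapply Forall_impl; [|exact IH]. simpl; intros; lia.
Qed.

Lemma alt_incr_NoDup : forall ks, alt_incr ks -> NoDup ks.
Proof.
  induction ks as [|k ks IH]; intros H; constructor; [|eauto using alt_incr_tail].
  intro Hin. pose proof (alt_incr_sorted _ _ H) as S. rewrite Forall_forall in S.
  specialize (S k Hin). lia.
Qed.

Lemma alt_incr_len : forall ks lo hi, alt_incr ks -> Forall (fun k => (lo <= k <= hi)%Z) ks ->
  (Z.of_nat (length ks) <= Z.max 0 (hi - lo + 1))%Z.
Proof.
  induction ks as [|k ks IH]; intros lo hi H F; simpl; [lia|].
  inversion F; subst. pose proof (alt_incr_sorted _ _ H) as S.
  specialize (IH (k + 1)%Z hi (alt_incr_tail _ _ H)).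
  assert (Forall (fun x => (k + 1 <= x <= hi)%Z) ks).
  { rewrite Forall_forall in *. intros x Hx. specialize (S x Hx). specialize (H3 x Hx). lia. }
  specialize (IH H0). lia.
Qed.

Lemma countdown_alt_incr : forall c n, alt_incr (map (fun h => (c - Z.of_nat h)%Z) (countdown n)).
Proof.
  intros c. induction n as [|[|n] IH]; [exact I|exact I|].
  cbn [countdown map alt_incr] in *. split; [lia|split; [|exact IH]].
  replace (c - Z.of_nat (S n))%Z with (c - Z.of_nat (S (S n)) + 1)%Z by lia.
  rewrite odd_succ. destruct (Z.odd (c - Z.of_nat (S (S n)))); discriminate.
Qed.

Lemma Omega_parity : forall xi e, tidy xi -> ftype xi = Some e ->
  exists k, Omega_g xi = Some k /\ has_parity e k.
Proof. intros xi e _ H. eexists; split; [apply Omega_eq; eauto|apply round_up_parity]. Qed.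

Lemma Omega_monotone : forall phi psi, tidy_fix phi -> tidy_fix psi -> sqle phi psi ->
  exists a b, Omega_g phi = Some a /\ Omega_g psi = Some b /\
    (a <= b)%Z /\ (ftype phi <> ftype psi -> (a < b)%Z).
Proof.
  intros phi psi Tphi Tpsi H.
  destruct (proj2 Tphi) as [e1 E1]. destruct (proj2 Tpsi) as [e2 E2].
  assert (Cl : cluster phi = cluster psi)
    by (apply cluster_eq; destruct (sqle_steps _ _ H); split; auto).
  rewrite (Omega_eq _ _ E1), (Omega_eq _ _ E2), Cl, E1, E2.
  do 2 eexists; split; [reflexivity|split; [reflexivity|]].
  destruct (classic (phi = psi)) as [<-|Ne].
  { rewrite E1 in E2. injection E2 as <-. split; [lia|congruence]. }
  assert (Lt : sqlt phi psi) by (split; auto; intro H'; apply Ne, sqle_antisym; auto).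
  destruct (classic (e1 = e2)) as [<-|Ne12].
  - pose proof (h_up_same_type phi psi Tphi Tpsi Lt ltac:(congruence)).
    split; [apply round_up_mono; lia|congruence].
  - assert (S (h_up psi) <= h_up phi).
    { apply h_up_step; auto. intros e Ee. rewrite E1 in Ee. injection Ee as <-.
      rewrite E2. f_equal. apply other_type; auto. }
    assert (Lt' := round_up_strict e1 e2 (Z.of_nat (cd (cluster psi)) - Z.of_nat (h_up phi))
                     (Z.of_nat (cd (cluster psi)) - Z.of_nat (h_up psi)) Ne12 ltac:(lia)).
    split; [lia|auto].
Qed.

Lemma chain_tidy_fix : forall l, alt_chain l -> Forall tidy_fix l.
Proof.
  induction l as [|a l IH]; intros H; constructor;
    [eapply alt_chain_head; eauto|apply IH; eapply alt_chain_tail; eauto].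
Qed.

Lemma Forall2_map_r : forall (A B : Type) (R : A -> B -> Prop) (g : A -> B) l,
  Forall (fun x => R x (g x)) l -> Forall2 R l (map g l).
Proof. intros A B R g l H; induction H; constructor; auto. Qed.

Section TidyCluster.
Variable phi : form.
Hypothesis Td : forall f, cluster phi f -> tidy f.

Local Notation C := (cluster phi).

(* cd is attained: chains in C are duplicate-free lists in the finite closure. *)
Lemma cd_spec : (exists l, alt_chain l /\ Forall C l /\ length l = cd C) /\
  forall l, alt_chain l -> Forall C l -> length l <= cd C.
Proof.
  assert (Cphi : C phi) by (split; apply rt_refl).
  destruct (tidy_finite_closure phi (Td _ Cphi)) as [L HL].
  destruct (maxnat_spec (fun n => exists l, alt_chain l /\ Forall C l /\ length l = n) (length L))
    as [Ex M].
  - exists 0, []. simpl; auto.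
  - intros n [l [Ch [Fl <-]]]. apply NoDup_incl_length; [apply chain_nodup; auto|].
    intros g Hg. apply HL. rewrite Forall_forall in Fl. apply (Fl g Hg).
  - split; [exact Ex|]. intros l Ch Fl. apply M. eauto.
Qed.

(* Heights in C are bounded by cd C: chains from c stay in C. *)
Lemma h_up_le : forall c, C c -> is_fix c -> h_up c <= cd C.
Proof.
  intros c Cc Fc. destruct (proj1 (h_up_spec c (conj (Td c Cc) Fc))) as [l [Ch <-]].
  apply (proj2 cd_spec); auto. constructor; auto. eapply chain_cluster; eauto.
Qed.

Lemma cd_chain_heights : forall l, alt_chain l -> Forall C l -> length l = cd C ->
  map h_up l = countdown (cd C).
Proof.
  intros [|a l] Ch Fl Len; [rewrite <- Len; reflexivity|].
  rewrite <- Len. apply maximal_chain_heights; auto. apply Nat.le_antisymm.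
  - rewrite Len. apply h_up_le; [inversion Fl; auto|apply (alt_chain_head _ _ Ch)].
  - apply (proj2 (h_up_spec a (alt_chain_head _ _ Ch))); auto.
Qed.

Section WithTop.
Variable T : form.
Hypothesis CT : C T.
Hypothesis FT : is_fix T.
Hypothesis MT : forall a, C a -> is_fix a -> fsize T <= fsize a.

(* A formula of height 1 has the type of the top: otherwise it would be
   followed by T in an alternating chain. *)
Lemma height_one_type : forall c, C c -> is_fix c -> h_up c = 1 -> ftype c = ftype T.
Proof.
  intros c Cc Fc H1. pose proof (top_sqle phi T CT FT MT Td c Cc Fc) as Le.
  destruct (classic (c = T)) as [->|Ne]; auto.
  assert (Lt : sqlt c T) by (split; auto; intro; apply Ne; apply sqle_antisym; auto).
  destruct Fc as [e Ee], FT as [e' Ee']. rewrite Ee, Ee'.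
  destruct (classic (e = e')) as [->|Ne']; auto. exfalso.
  assert (S (h_up T) <= h_up c); [|pose proof (h_up_ge1 T (conj (Td T CT) FT)); lia].
  apply h_up_step; auto; [split; auto; exists e; auto|split; auto|].
  intros e0 E0. rewrite Ee in E0. injection E0 as <-. rewrite Ee'. f_equal. apply other_type; auto.
Qed.

Lemma type_by_height : forall k, (forall eT, ftype T = Some eT -> has_parity eT (1 + k)) ->
  forall f e, C f -> ftype f = Some e -> has_parity e (Z.of_nat (h_up f) + k).
Proof.
  intros k HT.
  assert (H : forall h f e, h_up f = h -> C f -> ftype f = Some e -> has_parity e (Z.of_nat h + k)).
  { induction h as [h IH] using lt_wf_ind. intros f e Hh Cf Ef.
    assert (Tf : tidy_fix f) by (split; [auto|exists e; auto]).
    destruct (proj1 (h_up_spec f Tf)) as [[|b l] [Ch Len]].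
    - simpl in Len. assert (ftype f = ftype T) by (apply height_one_type; [auto|apply Tf|lia]).
      subst h. rewrite <- Len. apply HT. congruence.
    - destruct Ch as (_&Lt&Alt&Ch). pose proof (alt_chain_head _ _ Ch) as Tb.
      assert (Cb : C b).
      { destruct (sqle_steps _ _ (proj1 Lt)) as [S1 S2].
        apply (cluster_trans phi f); auto. eapply rt_trans; [exact S2|apply Cf]. }
      assert (Hb : h_up b = h - 1).
      { pose proof (proj2 (h_up_spec b Tb) l Ch). pose proof (h_up_step f b Tf Tb Lt Alt).
        simpl in *. lia. }
      pose proof (IH (h - 1) ltac:(simpl in Len; lia) b (fp_bar e) Hb Cb (Alt e Ef)) as Pb.
      apply has_parity_bar in Pb. replace (Z.of_nat h + k)%Z with (Z.of_nat (h - 1) + k + 1)%Z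
        by (simpl in Len; lia). exact Pb. }
  intros f e Cf Ef. eapply H; eauto.
Qed.
End WithTop.

Lemma Omega_by_height : exists off, (0 <= off <= 1)%Z /\
  forall f, C f -> is_fix f -> Omega_g f = Some (off + Z.of_nat (cd C) - Z.of_nat (h_up f))%Z.
Proof.
  destruct (classic (exists a, C a /\ is_fix a)) as [Ex|No];
    [|exists 0%Z; split; [lia|]; intros f Cf Ff; exfalso; eauto].
  destruct (exists_min_measure _ fsize Ex) as [T [[CT FT] MT]].
  destruct FT as [eT ET].
  set (k := match eT with MuT => 0%Z | NuT => 1%Z end).
  assert (Hk : forall e, ftype T = Some e -> has_parity e (1 + k))
    by (rewrite ET; intros e [= <-]; destruct eT; reflexivity).
  exists (if Z.odd (k + Z.of_nat (cd C)) then 1 else 0)%Z.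
  split; [destruct (Z.odd _); lia|]. intros f Cf [e Ef].
  rewrite (Omega_eq _ _ Ef), (cluster_eq phi f Cf). f_equal.
  pose proof (type_by_height T CT (ex_intro _ eT ET) (fun a Ca Fa => MT a (conj Ca Fa))
                k Hk f e Cf Ef) as Pf.
  rewrite (round_up_shift e _ (k + Z.of_nat (cd C))); [lia|].
  revert Pf. apply has_parity_odd.
  replace (Z.of_nat (cd C) - Z.of_nat (h_up f) + (k + Z.of_nat (cd C)))%Z
    with (Z.of_nat (h_up f) + k + 2 * (Z.of_nat (cd C) - Z.of_nat (h_up f)))%Z by lia.
  rewrite Z.odd_add_mul_2. reflexivity.
Qed.

(* Part (3): the chain of length cd has priorities off, off + 1, ...,
   off + cd - 1, which are all priorities of C and form an alternating
   sequence of maximal length. *)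
Lemma cd_ind_range : cd C = ind C /\
  exists ks : list Z, NoDup ks /\ (forall k, In k ks <-> range_Omega C k) /\ length ks = cd C.
Proof.
  destruct (proj1 cd_spec) as [l [Ch [Fl Len]]].
  destruct Omega_by_height as [off [Hoff Om]].
  pose proof (cd_chain_heights l Ch Fl Len) as Heights.
  assert (Fix : Forall (fun f => C f /\ is_fix f) l).
  { rewrite Forall_forall in *. pose proof (proj1 (Forall_forall _ _) (chain_tidy_fix l Ch)).
    intros f Hf; split; [auto|apply H; auto]. }
  set (n := cd C) in *.
  set (prio := fun h : nat => (off + Z.of_nat n - Z.of_nat h)%Z).
  set (ks := map prio (countdown n)).
  assert (Fks : Forall2 (fun f k => Omega_g f = Some k) l ks).
  { unfold ks. rewrite <- Heights, map_map. apply Forall2_map_r.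
    eapply Forall_impl; [|exact Fix]. intros f [Cf Ff]. apply Om; auto. }
  assert (Bnd : forall f k, C f /\ is_fix f -> Omega_g f = Some k -> (off <= k <= off + Z.of_nat n - 1)%Z).
  { intros f k [Cf Ff] Of. rewrite Om in Of by auto. injection Of as <-.
    pose proof (h_up_ge1 f (conj (Td f Cf) Ff)). pose proof (h_up_le f Cf Ff). unfold n in *; lia. }
  split.
  - unfold ind. symmetry. apply maxnat_eq.
    + exists l. split; [exact Fix|split; [exact Len|]]. exists ks. split; [exact Fks|apply countdown_alt_incr].
    + intros m [l' [Fl' [<- [ks' [F2 Ai]]]]]. rewrite (Forall2_length F2).
      assert (Fb : Forall (fun k => (off <= k <= off + Z.of_nat n - 1)%Z) ks').
      { clear - F2 Fl' Bnd. induction F2; inversion Fl'; constructor; eauto. }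
      pose proof (alt_incr_len ks' _ _ Ai Fb). lia.
  - exists ks. split; [apply alt_incr_NoDup, countdown_alt_incr|split].
    + intros k. split.
      * intros Hk. unfold ks in Hk. rewrite <- Heights, map_map, in_map_iff in Hk.
        destruct Hk as [f [<- Hf]]. rewrite Forall_forall in Fix. destruct (Fix f Hf) as [Cf Ff].
        exists f. split; auto.
      * intros [f [Cf Of]]. pose proof (Omega_is_fix _ _ Of) as Ff.
        rewrite Om in Of by auto. injection Of as <-.
        change (In (prio (h_up f)) (map prio (countdown n))). apply in_map, in_countdown.
        pose proof (h_up_ge1 f (conj (Td f Cf) Ff)). pose proof (h_up_le f Cf Ff). unfold n in *; lia.
    + unfold ks. rewrite <- Heights, !length_map. exact Len.
Qed.
End TidyCluster.

Theorem mainTheorem4 :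
  (* (1) *)
  (forall xi e, tidy xi -> ftype xi = Some e ->
     exists k, Omega_g xi = Some k /\ has_parity e k) /\
  (* (2) *)
  (forall phi psi, tidy_fix phi -> tidy_fix psi -> sqle phi psi ->
     exists a b, Omega_g phi = Some a /\ Omega_g psi = Some b /\
       (a <= b)%Z /\ (ftype phi <> ftype psi -> (a < b)%Z)) /\
  (* (3) *)
  (forall phi, (forall f, cluster phi f -> tidy f) ->
     cd (cluster phi) = ind (cluster phi) /\
     exists ks : list Z, NoDup ks /\
       (forall k, In k ks <-> range_Omega (cluster phi) k) /\
       length ks = cd (cluster phi)).
Proof.
  split; [exact Omega_parity|split; [exact Omega_monotone|exact cd_ind_range]].
Qed.
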